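(* For a positive integer $n$ let \[ A_n:=\sum_{k=0}^{n-1}(-1)^{n-1-k}\binom{2k}{k}^5(205k^2+160k+32). \] Then \[ A_n=16n\binom{2n}{n}\sum_{k=0}^{n-1}\binom{n+k-1}{k}^4(2k+n) \quad\text{and}\quad A_n=8n^2\binom{2n}{n}^2\sum_{k=0}^{n-1}(-1)^k\binom{2n-1}{n+k}\binom{2n-k-2}{n-k-1}^2 . \] *)

From mathcomp Require Import all_boot all_algebra.
Set Implicit Arguments. Unset Strict Implicit. Unset Printing Implicit Defensive.
Import GRing.Theory Num.Theory.
Local Open Scope ring_scope.

Definition A (n : nat) : int :=
  \sum_(0 <= k < n) (-1) ^+ (n - 1 - k)%N * ('C(2 * k, k) ^ 5)%:R
     * (205 * k ^ 2 + 160 * k + 32)%:R.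

(* A_n is determined by A_0 = 0 and A_(n+1) + A_n = C(2n,n)^5 P(n), P(n) = 205n^2 + 160n + 32.
   Both right-hand sides vanish at n = 0, and (n+1) C(2n+2,n+1) = 2(2n+1) C(2n,n) reduces their
   recurrences to recurrences for the inner sums S_m = sum_k C(m+k,k)^4 (2k+m+1) and
   U_m = sum_j (-1)^j C(2m+1,j) C(m+j,j)^2 (the second sum of the statement read backwards):
     32(2m+3) S_(m+1) + 16(m+1) S_m = C(2m+2,m+1)^4 P(m+1),
     8(m+1)^2 U_m - 32(2m+3)^2 U_(m+1) = (-1)^m C(2m+2,m+1)^3 P(m+1).
   Each is proved by creative telescoping: the summands of the left-hand side are differences of
   an explicit certificate, an identity checked over Q after writing every binomial as a rational
   multiple of a single one. *)

From mathcomp Require Import all_boot all_algebra.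
From mathcomp Require Import ring lra zify.
Set Implicit Arguments. Unset Strict Implicit. Unset Printing Implicit Defensive.
Import GRing.Theory Num.Theory.
Local Open Scope ring_scope.

Section BinomialRatios.
Variable F : numFieldType.

Lemma natr_binSS n k : ('C(n.+1, k.+1)%:R : F) = n.+1%:R / k.+1%:R * 'C(n, k)%:R.
Proof. by rewrite mulrAC -natrM (mul_bin_diag n.+1) natrM mulrC mulKf ?pnatr_eq0. Qed.

Lemma natr_bin_succ n k : ('C(n, k.+1)%:R : F) = (n - k)%:R / k.+1%:R * 'C(n, k)%:R.
Proof. by rewrite mulrAC -natrM -mul_bin_left natrM mulrC mulKf ?pnatr_eq0. Qed.

Lemma natr_bin_pred n k : ('C(n, k)%:R : F) = (n.+1 - k)%:R / n.+1%:R * 'C(n.+1, k)%:R.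
Proof. by rewrite mulrAC -natrM -(mul_bin_down n.+1) natrM mulrC mulKf ?pnatr_eq0. Qed.

End BinomialRatios.

Lemma bin_add_sym m k : 'C(m + k, k) = 'C(m + k, m).
Proof. by rewrite -bin_sub ?leq_addl // addnK. Qed.

Lemma bin_odd_mid n : 'C((2 * n).+1, n.+1) = 'C((2 * n).+1, n).
Proof.
have le_n : (n <= (2 * n).+1)%N by lia.
by rewrite -(bin_sub le_n) (_ : (2 * n).+1 - n = n.+1)%N //; lia.
Qed.

Lemma bin_ctrS n : 'C((2 * n).+2, n.+1) = (2 * 'C((2 * n).+1, n))%N.
Proof. by rewrite binS bin_odd_mid addnn -mul2n. Qed.

Lemma mul_bin_ctrS n : (n.+1 * 'C(2 * n.+1, n.+1) = 2 * (2 * n).+1 * 'C(2 * n, n))%N.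
Proof.
rewrite (_ : 2 * n.+1 = (2 * n).+2)%N ?bin_ctrS -?bin_odd_mid; last by lia.
by rewrite mulnCA -(mul_bin_diag (2 * n).+1) mulnA.
Qed.

Lemma signr_subn (R : pzRingType) m k : (k <= m)%N ->
  (-1) ^+ (m - k) = (-1) ^+ m * (-1) ^+ k :> R.
Proof. by move=> le_km; rewrite -{2}(subnK le_km) exprD -mulrA -expr2 sqrr_sign mulr1. Qed.

Definition apery_poly (n : nat) : nat := 205 * n ^ 2 + 160 * n + 32.

Lemma A_recr n : A n.+1 + A n = ('C(2 * n, n) ^ 5 * apery_poly n)%:R.
Proof.
rewrite /A big_nat_recr //= subn1 subnn expr0 mul1r -natrM addrAC -big_split.
rewrite big1_seq ?add0r // => k; rewrite mem_index_iota => /andP[_ lt_kn] /=.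
by rewrite subn1 (_ : n - k = (n - 1 - k).+1)%N ?exprS ?mulN1r ?mulNr ?addNr //; lia.
Qed.

Lemma eq_A_recr (f : nat -> int) : f 0%N = 0 ->
  (forall n, f n.+1 + f n = ('C(2 * n, n) ^ 5 * apery_poly n)%:R) ->
  forall n, f n = A n.
Proof.
move=> f0 fS; elim=> [|n IHn]; first by rewrite f0 /A big_nil.
by apply: (addIr (f n)); rewrite fS IHn A_recr.
Qed.

Definition sum1_term (m k : nat) : nat := 'C(m + k, m) ^ 4 * (2 * k + m + 1).

Definition sum1 (m : nat) : nat := \sum_(0 <= k < m.+1) sum1_term m k.

Definition sum1_cert (m k : nat) : nat :=
  16 * 'C(m + k, m.+1) ^ 4 * (2 * k ^ 2 + 6 * m.+1 * k + 5 * m.+1 ^ 2).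

Lemma sum1_certS m k : sum1_cert m k.+1 =
  (sum1_cert m k + 32 * (2 * m + 3) * sum1_term m.+1 k + 16 * m.+1 * sum1_term m k)%N.
Proof.
apply/eqP; rewrite -(eqr_nat rat) /sum1_cert /sum1_term addnS addSn.
rewrite !(natr_binSS, natr_bin_succ, natrX, natrM, natrD) addKn; apply/eqP.
by field; rewrite nat1r pnatr_eq0.
Qed.

Lemma sum1_top m : sum1_cert m m.+2 =
  (16 * m.+1 * sum1_term m m.+1 + 'C(2 * m.+1, m.+1) ^ 4 * apery_poly m.+1)%N.
Proof.
rewrite /sum1_cert /sum1_term /apery_poly.
have [-> -> ->] : [/\ m + m.+2 = (2 * m).+2, m + m.+1 = (2 * m).+1
                    & 2 * m.+1 = (2 * m).+2]%N by split; lia.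
by rewrite bin_ctrS; ring.
Qed.

Lemma sum1_recr m : (32 * (2 * m + 3) * sum1 m.+1 + 16 * m.+1 * sum1 m =
  'C(2 * m.+1, m.+1) ^ 4 * apery_poly m.+1)%N.
Proof.
have cert0 : sum1_cert m 0 = 0%N.
  by rewrite /sum1_cert addn0 (bin_small (ltnSn m)) exp0n // muln0 mul0n.
have telescope : (\sum_(0 <= k < m.+2)
    (32 * (2 * m + 3) * sum1_term m.+1 k + 16 * m.+1 * sum1_term m k) = sum1_cert m m.+2)%N.
  rewrite (eq_bigr (fun k => sum1_cert m k.+1 - sum1_cert m k)%N) => [|k _].
    by rewrite telescope_sumn_in ?cert0 ?subn0 // => k _; rewrite sum1_certS -addnA leq_addr.
  by rewrite sum1_certS -addnA addKn.
rewrite big_split -!big_distrr in telescope.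
rewrite [\sum_(0 <= i < m.+2) sum1_term m i]big_nat_recr //= sum1_top in telescope.
apply/(@addnI (16 * m.+1 * sum1_term m m.+1)); rewrite -telescope /sum1; ring.
Qed.

Definition sum2_term (m j : nat) : nat := 'C((2 * m).+1, j) * 'C(m + j, m) ^ 2.

Definition sum2 (m : nat) : int := \sum_(0 <= j < m.+1) (-1) ^+ j * (sum2_term m j)%:R.

(* The junk value 'C(_, 0.-1) is harmless: the factor 'C(m + j, m.+1) vanishes at j = 0. *)
Definition sum2_cert (m j : nat) : nat :=
  'C((2 * m).+2, j.-1) * 'C(m + j, m.+1) ^ 2 *
  (120 * m.+1 ^ 2 + 44 * m.+1 + (84 * m.+1 + 32) * j).

Lemma sum2_certS m j : (j <= (2 * m).+2)%N ->
  (sum2_cert m j.+1 + sum2_cert m j + 8 * m.+1 ^ 2 * sum2_term m j =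
   32 * (2 * m + 3) ^ 2 * sum2_term m.+1 j)%N.
Proof.
rewrite /sum2_cert /sum2_term; case: j => [_|i le_i].
  by rewrite !addn0 addn1 !bin0 !binn bin_small //; ring.
have [-> -> -> ->] : [/\ 2 * m.+1 = (2 * m).+2, m.+1 + i.+1 = (m + i).+2,
    m + i.+2 = (m + i).+2 & m + i.+1 = (m + i).+1]%N by split; lia.
apply/eqP; rewrite -(eqr_nat rat) [i.+2.-1]/= [i.+1.-1]/=.
rewrite !(natr_binSS _ (2 * m).+2, natr_binSS _ (m + i).+1, natr_bin_pred _ (2 * m).+1,
          natr_bin_succ, natrX, natrM, natrD).
have -> : ((m + i).+1 - m = i.+1)%N by lia.
rewrite !natrB ?(ltnW le_i) //; apply/eqP.
by field; rewrite !nat1r -natrM -natrD !pnatr_eq0.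
Qed.

Lemma sum2_top m :
  (sum2_cert m m.+2 + 8 * m.+1 ^ 2 * sum2_term m m.+1 =
   'C(2 * m.+1, m.+1) ^ 3 * apery_poly m.+1)%N.
Proof.
rewrite /sum2_cert /sum2_term /apery_poly [m.+2.-1]/=.
have [-> -> ->] : [/\ m + m.+2 = (2 * m).+2, m + m.+1 = (2 * m).+1
                    & 2 * m.+1 = (2 * m).+2]%N by split; lia.
by rewrite bin_odd_mid bin_ctrS; ring.
Qed.

Lemma sum2_recr m :
  (8 * m.+1 ^ 2)%:R * sum2 m - (32 * (2 * m + 3) ^ 2)%:R * sum2 m.+1 =
  (-1) ^+ m * ('C(2 * m.+1, m.+1) ^ 3 * apery_poly m.+1)%:R.
Proof.
have cert0 : sum2_cert m 0 = 0%N.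
  by rewrite /sum2_cert addn0 (bin_small (ltnSn m)) exp0n // muln0 mul0n.
have telescope : \sum_(0 <= j < m.+2)
    ((8 * m.+1 ^ 2)%:R * ((-1) ^+ j * (sum2_term m j)%:R)
     - (32 * (2 * m + 3) ^ 2)%:R * ((-1) ^+ j * (sum2_term m.+1 j)%:R))
  = (-1) ^+ m * (sum2_cert m m.+2)%:R :> int.
  rewrite (telescope_sumr_eq (fun j => (-1) ^+ j * (sum2_cert m j)%:R)) //.
    by rewrite cert0 mulr0 subr0 !exprS !mulN1r opprK.
  move=> j /andP[_ lt_j]; have le_j : (j <= (2 * m).+2)%N by lia.
  move/(congr1 (fun x : nat => x%:R : int)): (sum2_certS le_j) => cert.
  have -> : (sum2_cert m j.+1)%:R = (32 * (2 * m + 3) ^ 2 * sum2_term m.+1 j)%:R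
      - (sum2_cert m j)%:R - (8 * m.+1 ^ 2 * sum2_term m j)%:R :> int by lra.
  by rewrite exprS; ring.
rewrite sumrB -!big_distrr [X in _ * X - _]big_nat_recr //= in telescope.
by rewrite /sum2 -sum2_top [in RHS]natrD mulrDr -telescope exprS; ring.
Qed.

Definition A_form1 (n : nat) : int :=
  16%:R * n%:R * ('C(2 * n, n))%:R *
  \sum_(0 <= k < n) (('C(n + k - 1, k) ^ 4 * (2 * k + n))%N)%:R.

Definition A_form2 (n : nat) : int :=
  8%:R * (n ^ 2)%:R * (('C(2 * n, n)) ^ 2)%:R *
  \sum_(0 <= k < n) (-1) ^+ k
     * ('C(2 * n - 1, n + k) * 'C(2 * n - k - 2, n - k - 1) ^ 2)%:R.

Lemma A_form1S m : A_form1 m.+1 = (16 * m.+1 * 'C(2 * m.+1, m.+1) * sum1 m)%:R.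
Proof.
rewrite /A_form1 /sum1 -!natrM [in RHS]natrM natr_sum; congr (_ * _).
apply: eq_big_nat => k _; rewrite /sum1_term -bin_add_sym.
by have [-> ->] : [/\ m.+1 + k - 1 = m + k & 2 * k + m.+1 = 2 * k + m + 1]%N by split; lia.
Qed.

Lemma A_form2S m :
  A_form2 m.+1 = (8 * m.+1 ^ 2 * 'C(2 * m.+1, m.+1) ^ 2)%:R * ((-1) ^+ m * sum2 m).
Proof.
rewrite /A_form2 /sum2 -!natrM; congr (_ * _).
rewrite big_nat_rev big_distrr; apply: eq_big_nat => k /andP[_ lt_km].
rewrite add0n subSS (signr_subn _ (ltnSE lt_km)) -mulrA; congr (_ * (_ * _%:R)).
have [-> -> -> ->] : [/\ 2 * m.+1 - 1 = (2 * m).+1, m.+1 + (m - k) = (2 * m).+1 - k,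
    2 * m.+1 - (m - k) - 2 = m + k & m.+1 - (m - k) - 1 = k]%N by split; lia.
have le_k : (k <= (2 * m).+1)%N by lia.
by rewrite (bin_sub le_k) bin_add_sym.
Qed.

Lemma A_form1_recr n :
  A_form1 n.+1 + A_form1 n = ('C(2 * n, n) ^ 5 * apery_poly n)%:R.
Proof.
case: n => [|m]; first by rewrite /A_form1 big_nat1 big_nil !mulr0 addr0.
set c := 'C(2 * m.+1, m.+1).
rewrite !A_form1S -natrD (_ : c ^ 5 * _ = c * (c ^ 4 * apery_poly m.+1))%N; last by ring.
rewrite (_ : 16 * m.+2 * 'C(2 * m.+2, m.+2) = c * (32 * (2 * m + 3)))%N;
  last by rewrite -mulnA mul_bin_ctrS; ring.
by rewrite -sum1_recr; congr _%:R; ring.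
Qed.

Lemma A_form2_recr n :
  A_form2 n.+1 + A_form2 n = ('C(2 * n, n) ^ 5 * apery_poly n)%:R.
Proof.
case: n => [|m]; first by rewrite /A_form2 big_nat1 big_nil !mulr0 addr0.
set c := 'C(2 * m.+1, m.+1).
rewrite !A_form2S (_ : c ^ 5 * _ = c ^ 2 * (c ^ 3 * apery_poly m.+1))%N; last by ring.
rewrite (_ : 8 * m.+2 ^ 2 * 'C(2 * m.+2, m.+2) ^ 2 = c ^ 2 * (32 * (2 * m + 3) ^ 2))%N;
  last by rewrite -mulnA -[(_ ^ 2 * _ ^ 2)%N]expnMn mul_bin_ctrS; ring.
by rewrite [in RHS]natrM -[(c ^ 3 * _)%:R](signrMK m) -sum2_recr exprS; ring.
Qed.

Theorem theorem7 (n : nat) (hn : (0 < n)%N) :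
  A n = 16%:R * n%:R * ('C(2 * n, n))%:R *
          \sum_(0 <= k < n) (('C(n + k - 1, k) ^ 4 * (2 * k + n))%N)%:R
  /\
  A n = 8%:R * (n ^ 2)%:R * (('C(2 * n, n)) ^ 2)%:R *
          \sum_(0 <= k < n) (-1) ^+ k
             * ('C(2 * n - 1, n + k) * 'C(2 * n - k - 2, n - k - 1) ^ 2)%:R.
Proof.
(* Both identities also hold for n = 0. *)
split; symmetry.
- by apply: (eq_A_recr _ A_form1_recr); rewrite /A_form1 big_nil mulr0.
- by apply: (eq_A_recr _ A_form2_recr); rewrite /A_form2 big_nil mulr0.
Qed.
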